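(* Let $(X,\mathcal{B},\mu,G)$ be a measure-preserving system and $S\subset G$. Then the map $\mathfrak{P}\to[0,\infty)$, $\alpha\mapsto h^*_{\mu,S}(\alpha)$, is continuous with respect to the Rokhlin metric $\rho$. In particular, $\{\alpha\in\mathfrak{P}\colon h^*_{\mu,S}(\alpha)=0\}$ is closed in $(\mathfrak{P},\rho)$.
   Context: $(X,\mathcal{B},\mu)$ is a standard probability space and the discrete group $G$ acts measurably and preserves $\mu$. $\mathfrak{P}$ is the set of finite measurable partitions of $X$ (identified mod $0$); $g^{-1}\alpha=\{g^{-1}A\colon A\in\alpha\}$. $H_\mu(\alpha)=-\sum_{A\in\alpha}\mu(A)\log\mu(A)$, $H_\mu(\alpha|\beta)=\sum_{B\in\beta}\mu(B)\sum_{A\in\alpha}-\mu(A|B)\log\mu(A|B)$ with $\mu(A|B)=\mu(A\cap B)/\mu(B)$ ($0$ if $\mu(B)=0$); $\rho(\alpha,\beta)=H_\mu(\alpha|\beta)+H_\mu(\beta|\alpha)$. $h^*_{\mu,S}(\alpha)=\limsup_n\frac1n\sup_{\alpha_1,\dots,\alpha_n\in\{g^{-1}\alpha\colon g\in S\}}H_\mu(\bigvee_{i=1}^n\alpha_i)$. *)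

From HB Require Import structures.
From mathcomp Require Import all_boot all_order all_algebra.
From mathcomp Require Import all_classical all_reals all_analysis.

Set Implicit Arguments.
Unset Strict Implicit.
Unset Printing Implicit Defensive.
Import Order.TTheory GRing.Theory Num.Theory.

Local Open Scope classical_set_scope.
Local Open Scope ring_scope.

Section Entropy.
Context {d : measure_display} {T : measurableType d} {R : realType}.
Variable mu : probability T R.

(** A finite measurable partition of T, given as a finite list of blocks
    (empty blocks allowed; they do not affect any of the quantities below). *)
Definition is_partition (a : seq (set T)) : Prop :=
  [/\ forall i, (i < size a)%N -> measurable (nth set0 a i),
      (forall i j, (i < size a)%N -> (j < size a)%N -> i <> j ->
         nth set0 a i `&` nth set0 a j = set0)
    & \big[setU/set0]_(A <- a) A = setT].

Definition rmu (A : set T) : R := fine (mu A).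

Definition eta (x : R) : R := if x == 0 then 0 else - (x * ln x).

Definition Hent (a : seq (set T)) : R := \sum_(A <- a) eta (rmu A).

Definition cmu (A B : set T) : R :=
  if rmu B == 0 then 0 else rmu (A `&` B) / rmu B.

Definition Hcond (a b : seq (set T)) : R :=
  \sum_(B <- b) rmu B * \sum_(A <- a) eta (cmu A B).

Definition rokhlin (a b : seq (set T)) : R := Hcond a b + Hcond b a.

Definition pjoin (a b : seq (set T)) : seq (set T) :=
  [seq A `&` B | A <- a, B <- b].

End Entropy.

Section Action.
Context {d : measure_display} {T : measurableType d} {R : realType}.
Context {G : groupType}.

Definition mp_action (mu : probability T R) (act : G -> T -> T) : Prop :=
  [/\ forall x, act 1%g x = x,
      forall g h x, act (g * h)%g x = act g (act h x),
      forall g, measurable_fun setT (act g)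
    & forall g A, measurable A -> mu (act g @^-1` A) = mu A].

(** g^{-1} alpha = { g^{-1} A : A in alpha }, where g^{-1}A = {x | g x ∈ A} *)
Definition ptrans (act : G -> T -> T) (g : G) (a : seq (set T)) : seq (set T) :=
  [seq act g @^-1` A | A <- a].

Definition Hjoins (mu : probability T R) (act : G -> T -> T) (S : set G)
    (a : seq (set T)) (n : nat) : set R :=
  [set Hent mu (\big[pjoin/[:: setT]]_(i < n) ptrans act (gs i) a)
     | gs in [set gs : 'I_n -> G | forall i, S (gs i)]].

Definition hstar (mu : probability T R) (act : G -> T -> T) (S : set G)
    (a : seq (set T)) : R :=
  limn_sup (fun n : nat => n%:R^-1 * sup (Hjoins mu act S a n)).

End Action.

From Pilot Require Import Defs.
From HB Require Import structures.
From mathcomp Require Import all_boot all_order all_algebra.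
From mathcomp Require Import all_classical all_reals all_analysis.
From mathcomp Require Import ring lra.
Set Implicit Arguments.
Unset Strict Implicit.
Unset Printing Implicit Defensive.
Import Order.TTheory GRing.Theory Num.Theory.
Local Open Scope classical_set_scope.
Local Open Scope ring_scope.

(* For group elements g_1, ..., g_n write a_i = g_i^-1 a and b_i = g_i^-1 b.
   Then H(\/ a_i) <= H(\/ a_i \/ \/ b_i) = H(\/ b_i) + H(\/ a_i | \/ b_i), and
   conditional entropy is subadditive over joins (a consequence of strong
   subadditivity of H), so H(\/ a_i | \/ b_i) <= sum_i H(a_i | b_i), which is
   n H(a | b) by invariance of mu.  Dividing by n and passing to the supremum
   and the limsup gives h*(a) <= h*(b) + H(a | b); symmetrizing,
   |h*(a) - h*(b)| <= rho(a, b). *)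

(* The imported libraries also export an [eta]. *)
Local Notation eta := Defs.eta.

Section EtaInequalities.
Variable R : realType.
Implicit Types (x a b : R).

Lemma etaE x : eta x = - (x * ln x).
Proof. by rewrite /Defs.eta; have [->|//] := eqVneq x 0; rewrite mul0r oppr0. Qed.

Lemma eta0 : eta (0 : R) = 0.
Proof. by rewrite etaE mul0r oppr0. Qed.

Lemma eta1 : eta (1 : R) = 0.
Proof. by rewrite etaE ln1 mulr0 oppr0. Qed.

Lemma ler_sum_mem (I : eqType) (r : seq I) (F : I -> R) i :
  i \in r -> (forall j, 0 <= F j) -> F i <= \sum_(j <- r) F j.
Proof. by move=> ir F0; rewrite (big_rem i ir) /= lerDl sumr_ge0. Qed.

Lemma eta_sum_le (I : eqType) (r : seq I) (q : I -> R) :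
  (forall i, 0 <= q i) -> eta (\sum_(i <- r) q i) <= \sum_(i <- r) eta (q i).
Proof.
move=> q0; rewrite etaE; under [leRHS]eq_bigr do rewrite etaE.
rewrite sumrN lerN2 mulr_suml big_seq [leRHS]big_seq; apply: ler_sum => i ir.
have [->|qn0] := eqVneq (q i) 0; first by rewrite !mul0r.
have qp : 0 < q i by rewrite lt_def qn0 q0.
rewrite ler_wpM2l // ler_ln ?posrE //; first exact: ler_sum_mem.
by apply: lt_le_trans qp _; apply: ler_sum_mem.
Qed.

(* From [ln w <= w - 1] with [w = b / a]. *)
Lemma eta_add_mul_ln_le a b : 0 <= a -> 0 <= b -> (0 < a -> 0 < b) ->
  eta a + a * ln b <= b - a.
Proof.
move=> a0 b0 ab; have [->|an0] := eqVneq a 0.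
  by rewrite eta0 mul0r addr0 subr0.
have ap : 0 < a by rewrite lt_def an0.
have bp := ab ap.
have lnw : ln (b / a) <= b / a - 1.
  have := @le_ln1Dx R (b / a - 1); rewrite addrCA subrr addr0; apply.
  by have := divr_gt0 bp ap; lra.
rewrite ln_div ?posrE // in lnw.
have := ler_wpM2l (ltW ap) lnw.
rewrite etaE mulrBr mulrBr mulr1 mulrCA divff // mulr1; lra.
Qed.

(* Gibbs' inequality for the product [r i * s j / t] of the marginals of [p]. *)
Lemma eta_joint_le (I J : eqType) (ri : seq I) (rj : seq J) (p : I -> J -> R) :
  (forall i j, 0 <= p i j) ->
  \sum_(i <- ri) \sum_(j <- rj) eta (p i j)
    + eta (\sum_(i <- ri) \sum_(j <- rj) p i j)
  <= \sum_(i <- ri) eta (\sum_(j <- rj) p i j)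
     + \sum_(j <- rj) eta (\sum_(i <- ri) p i j).
Proof.
move=> p0.
pose r i := \sum_(j <- rj) p i j.
pose s j := \sum_(i <- ri) p i j.
pose t := \sum_(i <- ri) r i.
have ts : \sum_(j <- rj) s j = t by rewrite exchange_big.
have le_r i j : j \in rj -> p i j <= r i by move=> jj; apply: ler_sum_mem.
have le_s i j : i \in ri -> p i j <= s j.
  by move=> ii; apply: (@ler_sum_mem _ _ (p^~ j)).
have le_t i : i \in ri -> r i <= t.
  by move=> ii; apply: ler_sum_mem => // k; apply: sumr_ge0.
pose b i j := r i * s j / t.
have pos_of_p i j : i \in ri -> j \in rj -> 0 < p i j ->
    [/\ 0 < r i, 0 < s j & 0 < t].
  move=> ii jj pp; have rp := lt_le_trans pp (le_r i j jj).
  split => //; first exact: lt_le_trans pp (le_s i j ii).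
  exact: lt_le_trans rp (le_t i ii).
have gibbs : \sum_(i <- ri) \sum_(j <- rj) (eta (p i j) + p i j * ln (b i j))
    <= \sum_(i <- ri) \sum_(j <- rj) (b i j - p i j).
  rewrite big_seq [leRHS]big_seq; apply: ler_sum => i ii.
  rewrite big_seq [leRHS]big_seq; apply: ler_sum => j jj.
  apply: eta_add_mul_ln_le => // [|/(pos_of_p i j ii jj)[rp sp tp]].
    by rewrite divr_ge0 ?mulr_ge0 ?sumr_ge0 // => *; apply: sumr_ge0.
  by rewrite divr_gt0 ?mulr_gt0.
have rhs0 : \sum_(i <- ri) \sum_(j <- rj) (b i j - p i j) = 0.
  rewrite (eq_bigr (fun i => r i * t / t - r i)) => [|i _]; last first.
    by rewrite sumrB -mulr_suml -mulr_sumr ts.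
  rewrite sumrB -!mulr_suml -/t.
  by have [->|tn0] := eqVneq t 0; rewrite ?mul0r ?subrr // mulfK // subrr.
have lhsE : \sum_(i <- ri) \sum_(j <- rj) (eta (p i j) + p i j * ln (b i j)) =
    \sum_(i <- ri) \sum_(j <- rj) eta (p i j)
    + \sum_(i <- ri) r i * ln (r i) + \sum_(j <- rj) s j * ln (s j) - t * ln t.
  transitivity (\sum_(i <- ri) \sum_(j <- rj)
      (eta (p i j) + p i j * ln (r i) + p i j * ln (s j) - p i j * ln t)).
    apply: eq_big_seq => i ii; apply: eq_big_seq => j jj.
    have [->|pn0] := eqVneq (p i j) 0; first by rewrite !mul0r !addr0 subr0.
    have pp : 0 < p i j by rewrite lt_def pn0 p0.
    have [rp sp tp] := pos_of_p i j ii jj pp.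
    by rewrite /b ln_div ?lnM ?posrE ?mulr_gt0 //; ring.
  under eq_bigr do rewrite sumrB !big_split /= -!mulr_suml.
  rewrite sumrB !big_split /= -mulr_suml -/t.
  rewrite [X in _ + X - _]exchange_big /=.
  by under [X in _ + X - _]eq_bigr do rewrite -mulr_suml.
have : \sum_(i <- ri) \sum_(j <- rj) eta (p i j) + eta t
    <= \sum_(i <- ri) eta (r i) + \sum_(j <- rj) eta (s j).
  rewrite etaE; under [X in _ <= X + _]eq_bigr do rewrite etaE.
  under [X in _ <= _ + X]eq_bigr do rewrite etaE.
  rewrite !sumrN; lra.
by [].
Qed.
End EtaInequalities.

Section Entropy.
Context (R : realType) (d : measure_display) (T : measurableType d)
  (mu : probability T R).
Local Notation rmu := (Defs.rmu mu).
Local Notation Hent := (Defs.Hent mu).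
Local Notation Hcond := (Defs.Hcond mu).
Implicit Types (A B : set T) (a b x y z : seq (set T)).

Lemma rmu_ge0 A : 0 <= rmu A.
Proof. exact/fine_ge0/measure_ge0. Qed.

Lemma rmu0 : rmu set0 = 0.
Proof. by rewrite /Defs.rmu measure0. Qed.

Lemma rmuT : rmu setT = 1.
Proof. by rewrite /Defs.rmu probability_setT. Qed.

Lemma rmuU A B : measurable A -> measurable B -> A `&` B = set0 ->
  rmu (A `|` B) = rmu A + rmu B.
Proof.
move=> mA mB AB; rewrite /Defs.rmu measureU // fineD //; exact: fin_num_measure.
Qed.

(* For a finite family of measurable sets, additivity over [z] means that [z]
   is a partition up to null sets; unlike [is_partition], it is stable under
   [pjoin]. *)
Definition partition_mod0 z :=
  (forall Z, Z \in z -> measurable Z) /\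
  (forall A, measurable A -> \sum_(Z <- z) rmu (A `&` Z) = rmu A).

Lemma sum_rmuI_disjoint z A :
  (forall i, (i < size z)%N -> measurable (nth set0 z i)) ->
  (forall i j, (i < size z)%N -> (j < size z)%N -> i <> j ->
     nth set0 z i `&` nth set0 z j = set0) ->
  measurable A ->
  \sum_(Z <- z) rmu (A `&` Z) = rmu (A `&` \big[setU/set0]_(Z <- z) Z).
Proof.
elim: z => [|Z z IH] mz dz mA; first by rewrite !big_nil setI0 rmu0.
have mem_z Y : Y \in z -> exists2 i, (i < size z)%N & nth set0 z i = Y.
  by move=> Yz; exists (index Y z); rewrite ?index_mem ?nth_index.
have mZ : measurable Z by exact: (mz 0%N).
have mU : measurable (\big[setU/set0]_(Y <- z) Y).
  rewrite big_seq; apply: bigsetU_measurable => Y /mem_z[i iz <-].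
  exact: (mz i.+1).
have disj : Z `&` \big[setU/set0]_(Y <- z) Y = set0.
  rewrite big_seq; elim/big_ind: _ => [|U V hU hV|Y /mem_z[i iz <-]].
  - exact: setI0.
  - by rewrite setIUr hU hV setU0.
  - exact: (dz 0%N i.+1).
rewrite !big_cons IH //; last 2 first.
- by move=> i iz; exact: (mz i.+1).
- by move=> i j iz jz ij; apply: (dz i.+1 j.+1) => // -[] /ij.
rewrite setIUr rmuU //; [exact: measurableI | exact: measurableI |].
by rewrite setIACA setIid disj setI0.
Qed.

Lemma is_partition_mod0 z : is_partition z -> partition_mod0 z.
Proof.
case=> mz dz cz; split.
- by move=> Y Yz; rewrite -(nth_index set0 Yz); apply: mz; rewrite index_mem.
- by move=> A mA; rewrite sum_rmuI_disjoint // cz setIT.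
Qed.

Lemma sum_pjoin x y (F : set T -> R) :
  \sum_(W <- pjoin x y) F W = \sum_(X <- x) \sum_(Y <- y) F (X `&` Y).
Proof. exact: big_allpairs_dep. Qed.

Lemma pjoin_mod0 x y :
  partition_mod0 x -> partition_mod0 y -> partition_mod0 (pjoin x y).
Proof.
move=> [mx sx] [my sy]; split.
- by move=> _ /allpairsP[[X Y] [/= /mx ? /my ? ->]]; apply: measurableI.
- move=> A mA; rewrite sum_pjoin -(sx A mA); apply: eq_big_seq => X /mx mX.
  by under eq_bigr do rewrite setIA; apply: sy; apply: measurableI.
Qed.

Lemma setT_mod0 : partition_mod0 [:: setT].
Proof.
split; first by move=> Z; rewrite mem_seq1 => /eqP ->.
by move=> A mA; rewrite big_seq1 setIT.
Qed.

Lemma Hent_setT : Hent [:: setT] = 0.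
Proof. by rewrite /Defs.Hent big_seq1 rmuT eta1. Qed.

Lemma Hent_pjoinC x y : Hent (pjoin x y) = Hent (pjoin y x).
Proof.
rewrite /Defs.Hent !sum_pjoin exchange_big /=.
by apply: eq_bigr => Y _; apply: eq_bigr => X _; rewrite setIC.
Qed.

Lemma Hent_pjoin_setT x : Hent (pjoin x [:: setT]) = Hent x.
Proof.
by rewrite /Defs.Hent sum_pjoin; under eq_bigr do rewrite big_seq1 setIT.
Qed.

Lemma Hent_pjoinACA (a1 a2 b1 b2 : seq (set T)) :
  Hent (pjoin (pjoin a1 a2) (pjoin b1 b2)) =
  Hent (pjoin (pjoin a1 b1) (pjoin a2 b2)).
Proof.
rewrite /Defs.Hent !sum_pjoin.
under eq_bigr do under eq_bigr do rewrite sum_pjoin.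
under [RHS]eq_bigr do under eq_bigr do rewrite sum_pjoin.
under eq_bigr do rewrite exchange_big.
by under eq_bigr do under eq_bigr do under eq_bigr do under eq_bigr do
  rewrite setIACA.
Qed.

Lemma Hent_le_pjoin x y : partition_mod0 x -> partition_mod0 y ->
  Hent x <= Hent (pjoin x y).
Proof.
move=> [mx _] [_ sy]; rewrite /Defs.Hent sum_pjoin big_seq [leRHS]big_seq.
apply: ler_sum => X /mx mX; rewrite -(sy X mX).
by apply: eta_sum_le => ?; exact: rmu_ge0.
Qed.

Lemma Hent_ge0 x : partition_mod0 x -> 0 <= Hent x.
Proof.
move=> px; rewrite -Hent_setT; apply: le_trans (Hent_le_pjoin setT_mod0 px) _.
by rewrite Hent_pjoinC Hent_pjoin_setT.
Qed.

(* Blockwise in [y]: [eta_joint_le] applied to the masses of [X `&` Y `&` Z]. *)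
Lemma Hent_strong_subadd x y z :
  partition_mod0 x -> partition_mod0 y -> partition_mod0 z ->
  Hent (pjoin (pjoin x y) z) + Hent y <= Hent (pjoin x y) + Hent (pjoin y z).
Proof.
move=> [mx sx] [my sy] [mz sz].
rewrite /Defs.Hent !sum_pjoin.
rewrite [X in X + _ <= _]exchange_big [X in _ <= X + _]exchange_big /=.
rewrite -!big_split /= big_seq [leRHS]big_seq; apply: ler_sum => Y /my mY.
have mXY X : X \in x -> measurable (X `&` Y) by move/mx/measurableI; apply.
have rows : \sum_(X <- x) eta (\sum_(Z <- z) rmu (X `&` Y `&` Z)) =
            \sum_(X <- x) eta (rmu (X `&` Y)).
  by apply: eq_big_seq => X /mXY /sz ->.
have cols : \sum_(Z <- z) eta (\sum_(X <- x) rmu (X `&` Y `&` Z)) =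
            \sum_(Z <- z) eta (rmu (Y `&` Z)).
  apply: eq_big_seq => Z /mz mZ; rewrite -(sx (Y `&` Z)); last exact: measurableI.
  by congr (eta _); apply: eq_bigr => X _; rewrite -setIA setIC.
have total : \sum_(X <- x) \sum_(Z <- z) rmu (X `&` Y `&` Z) = rmu Y.
  rewrite -(sx Y mY); apply: eq_big_seq => X /mXY /sz ->.
  by rewrite setIC.
have := eta_joint_le x z (fun X Z => rmu_ge0 (X `&` Y `&` Z)).
by rewrite rows cols total.
Qed.

Lemma HcondE a b : partition_mod0 a -> partition_mod0 b ->
  Hcond a b = Hent (pjoin a b) - Hent b.
Proof.
move=> [ma sa] [mb sb].
rewrite /Defs.Hcond /Defs.Hent sum_pjoin exchange_big /= -sumrB.
apply: eq_big_seq => B /mb mB.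
have sumA : \sum_(A <- a) rmu (A `&` B) = rmu B.
  by rewrite -(sa B mB); apply: eq_bigr => A _; rewrite setIC.
have [B0|Bn0] := eqVneq (rmu B) 0.
  rewrite B0 mul0r eta0 subr0 big_seq big1 // => A Aa.
  suff -> : rmu (A `&` B) = 0 by rewrite eta0.
  apply/eqP; rewrite eq_le rmu_ge0 andbT -B0 -sumA.
  by apply: (@ler_sum_mem _ _ _ (fun A => rmu (A `&` B))) => // ?; exact: rmu_ge0.
have Bp : 0 < rmu B by rewrite lt_def Bn0 rmu_ge0.
have termE A : rmu B * eta (cmu mu A B) =
    eta (rmu (A `&` B)) + rmu (A `&` B) * ln (rmu B).
  rewrite /Defs.cmu (negPf Bn0).
  have [->|ABn0] := eqVneq (rmu (A `&` B)) 0.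
    by rewrite mul0r eta0 mulr0 mul0r addr0.
  have ABp : 0 < rmu (A `&` B) by rewrite lt_def ABn0 rmu_ge0.
  by rewrite !etaE ln_div ?posrE //; field.
rewrite mulr_sumr (eq_bigr _ (fun A _ => termE A)) big_split /=.
by rewrite -mulr_suml sumA etaE opprK.
Qed.

Lemma Hcond_ge0 a b : partition_mod0 a -> partition_mod0 b -> 0 <= Hcond a b.
Proof.
by move=> pa pb; rewrite HcondE // subr_ge0 Hent_pjoinC Hent_le_pjoin.
Qed.

Lemma Hcond_setT a : partition_mod0 a -> Hcond a [:: setT] = Hent a.
Proof.
move=> pa; rewrite HcondE ?Hent_pjoin_setT ?Hent_setT ?subr0 //.
exact: setT_mod0.
Qed.

Lemma Hcond_pjoin_le (a1 a2 b1 b2 : seq (set T)) :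
  partition_mod0 a1 -> partition_mod0 a2 ->
  partition_mod0 b1 -> partition_mod0 b2 ->
  Hcond (pjoin a1 a2) (pjoin b1 b2) <= Hcond a1 b1 + Hcond a2 b2.
Proof.
move=> pa1 pa2 pb1 pb2.
have [pa pb] := (pjoin_mod0 pa1 pa2, pjoin_mod0 pb1 pb2).
rewrite !HcondE // Hent_pjoinACA.
have := Hent_strong_subadd pa1 pb1 (pjoin_mod0 pa2 pb2).
have := Hent_strong_subadd pa2 pb2 pb1.
rewrite [Hent (pjoin b1 (pjoin a2 b2))]Hent_pjoinC [Hent (pjoin b2 b1)]Hent_pjoinC.
lra.
Qed.

Definition bigjoin n (F : 'I_n -> seq (set T)) := \big[pjoin/[:: setT]]_(i < n) F i.

Lemma bigjoin_mod0 n (F : 'I_n -> seq (set T)) :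
  (forall i, partition_mod0 (F i)) -> partition_mod0 (bigjoin F).
Proof.
move=> pF; elim/big_ind: (bigjoin F) => //; [exact: setT_mod0 | exact: pjoin_mod0].
Qed.

Lemma Hcond_bigjoin_le n (F G : 'I_n -> seq (set T)) :
  (forall i, partition_mod0 (F i)) -> (forall i, partition_mod0 (G i)) ->
  Hcond (bigjoin F) (bigjoin G) <= \sum_(i < n) Hcond (F i) (G i).
Proof.
elim: n F G => [|n IH] F G pF pG.
  by rewrite /bigjoin !big_ord0 Hcond_setT ?Hent_setT //; exact: setT_mod0.
have pF' := bigjoin_mod0 (fun i => pF (lift ord0 i)).
have pG' := bigjoin_mod0 (fun i => pG (lift ord0 i)).
rewrite /bigjoin !big_ord_recl.
apply: le_trans (Hcond_pjoin_le (pF ord0) pF' (pG ord0) pG') _.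
by rewrite lerD2l; apply: IH.
Qed.
End Entropy.

Section SupLimsup.
Variable R : realType.
Implicit Types (E : set R) (u v : R^o^nat).

Lemma sup_ge0 E : has_ubound E -> (forall x, E x -> 0 <= x) -> 0 <= sup E.
Proof.
move=> ubE E0; have [->|/set0P[x Ex]] := eqVneq E set0; first by rewrite sup0.
exact: le_trans (E0 x Ex) (ub_le_sup ubE Ex).
Qed.

(* [sup set0 = 0], hence the sign condition. *)
Lemma ge_sup_ge0 E M : 0 <= M -> ubound E M -> sup E <= M.
Proof.
move=> M0 EM; have [->|/set0P E0] := eqVneq E set0; first by rewrite sup0.
exact: ge_sup.
Qed.

Lemma bounded_fun_le u M : (forall n, `|u n| <= M) -> bounded_fun u.
Proof.
move=> uM; rewrite /bounded_fun /bounded_near; near=> K => n _ /=.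
by apply: le_trans (uM n) _; near: K; apply: nbhs_pinfty_ge; exact: num_real.
Unshelve. all: end_near. Qed.

Lemma le_limn_sup u v : bounded_fun u -> bounded_fun v ->
  (forall n, u n <= v n) -> limn_sup u <= limn_sup v.
Proof.
move=> bu bv uv; apply: ler_lim.
- apply: nonincreasing_is_cvgn; last exact: bounded_fun_has_lbound_sups.
  exact/nonincreasing_sups/bounded_fun_has_ubound.
- apply: nonincreasing_is_cvgn; last exact: bounded_fun_has_lbound_sups.
  exact/nonincreasing_sups/bounded_fun_has_ubound.
apply: nearW => k; apply: ge_sup; first by exists (u k); exists k => /=.
move=> _ [m /= km <-]; apply: le_trans (uv m) _; apply: ub_le_sup; last by exists m.
exact/has_ubound_sdrop/bounded_fun_has_ubound.
Qed.

Lemma limn_sup_cst (c : R) : limn_sup (fun _ : nat => c) = c.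
Proof.
rewrite cvg_limn_supE; last exact: is_cvg_cst.
exact: lim_cst.
Qed.

Lemma mulVn_le1 n : n%:R^-1 * n%:R <= 1 :> R.
Proof. by case: n => [|n]; rewrite ?invr0 ?mul0r // mulVf ?pnatr_eq0. Qed.

End SupLimsup.

Section Action.
Context (R : realType) (d : measure_display) (T : measurableType d)
  (mu : probability T R) (G : groupType) (act : G -> T -> T).
Hypothesis mp : mp_action mu act.
Local Notation rmu := (Defs.rmu mu).
Local Notation Hent := (Defs.Hent mu).
Local Notation Hcond := (Defs.Hcond mu).
Implicit Types (a b z : seq (set T)).

Lemma rmu_preimage g A : measurable A -> rmu (act g @^-1` A) = rmu A.
Proof. by case: mp => _ _ _ pres mA; rewrite /Defs.rmu pres. Qed.

Lemma preimage_bigsetU (aT rT : Type) (f : aT -> rT) (z : seq (set rT)) :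
  f @^-1` (\big[setU/set0]_(A <- z) A) = \big[setU/set0]_(A <- z) f @^-1` A.
Proof.
elim: z => [|A z IH]; first by rewrite !big_nil preimage_set0.
by rewrite !big_cons preimage_setU IH.
Qed.

Lemma ptrans_partition g z : is_partition z -> is_partition (ptrans act g z).
Proof.
case: mp => _ _ mact _ [mz dz cz]; split; rewrite ?size_map.
- move=> i iz; rewrite (nth_map set0) //.
  by have := mact g measurableT _ (mz i iz); rewrite setTI.
- move=> i j iz jz ij; rewrite !(nth_map set0) // -preimage_setI.
  by rewrite dz ?preimage_set0.
- by rewrite /ptrans big_map -preimage_bigsetU cz preimage_setT.
Qed.

Lemma is_partition_setT : is_partition [:: @setT T].
Proof.
split; last by rewrite big_seq1.
- by case=> // _; exact: measurableT.
- by case=> [|i] [|j].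
Qed.

Lemma Hcond_ptrans g a b : is_partition a -> is_partition b ->
  Hcond (ptrans act g a) (ptrans act g b) = Hcond a b.
Proof.
move=> /(is_partition_mod0 mu)[ma _] /(is_partition_mod0 mu)[mb _].
rewrite /Defs.Hcond /ptrans big_map; apply: eq_big_seq => B /mb mB.
rewrite big_map rmu_preimage //; congr (_ * _); apply: eq_big_seq => A /ma mA.
by rewrite /Defs.cmu -preimage_setI !rmu_preimage //; exact: measurableI.
Qed.

Lemma bigjoin_ptrans_setT n (gs : 'I_n -> G) :
  bigjoin (fun i => ptrans act (gs i) [:: setT]) = [:: setT].
Proof.
by rewrite /bigjoin; elim/big_ind: _ => // x y -> ->; rewrite /pjoin /= setIid.
Qed.

Lemma Hent_bigjoin_ptrans_le n (gs : 'I_n -> G) a b :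
  is_partition a -> is_partition b ->
  Hent (bigjoin (fun i => ptrans act (gs i) a)) <=
  Hent (bigjoin (fun i => ptrans act (gs i) b)) + n%:R * Hcond a b.
Proof.
move=> pa pb.
have mod0 c : is_partition c -> forall i, partition_mod0 mu (ptrans act (gs i) c).
  by move=> pc i; exact/is_partition_mod0/ptrans_partition.
have [pFa pFb] := (bigjoin_mod0 (mod0 a pa), bigjoin_mod0 (mod0 b pb)).
have chain := HcondE pFa pFb.
have := Hcond_bigjoin_le (mod0 a pa) (mod0 b pb).
have -> : \sum_(i < n) Hcond (ptrans act (gs i) a) (ptrans act (gs i) b) =
          n%:R * Hcond a b.
  under eq_bigr do rewrite Hcond_ptrans //.
  by rewrite sumr_const card_ord mulr_natl.
have := Hent_le_pjoin pFa pFb; lra.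
Qed.

Lemma Hent_bigjoin_ptrans_ge0 n (gs : 'I_n -> G) a : is_partition a ->
  0 <= Hent (bigjoin (fun i => ptrans act (gs i) a)).
Proof.
move=> pa; apply/Hent_ge0/bigjoin_mod0 => i.
exact/is_partition_mod0/ptrans_partition.
Qed.

Lemma Hent_bigjoin_ptrans_le_mul n (gs : 'I_n -> G) a : is_partition a ->
  Hent (bigjoin (fun i => ptrans act (gs i) a)) <= n%:R * Hent a.
Proof.
move=> pa; have := Hent_bigjoin_ptrans_le gs pa is_partition_setT.
rewrite bigjoin_ptrans_setT Hent_setT add0r Hcond_setT //.
exact: is_partition_mod0.
Qed.

Variable S : set G.

Definition Hjoins_rate a n := n%:R^-1 * sup (Hjoins mu act S a n).

Lemma Hjoins_ge0_le a n x : is_partition a -> Hjoins mu act S a n x ->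
  0 <= x <= n%:R * Hent a.
Proof.
move=> pa [gs _ <-].
by rewrite Hent_bigjoin_ptrans_ge0 // Hent_bigjoin_ptrans_le_mul.
Qed.

Lemma Hjoins_ub a n : is_partition a -> has_ubound (Hjoins mu act S a n).
Proof. by move=> pa; exists (n%:R * Hent a) => x /(Hjoins_ge0_le pa)/andP[]. Qed.

Lemma sup_Hjoins_ge0 a n : is_partition a -> 0 <= sup (Hjoins mu act S a n).
Proof.
by move=> pa; apply: sup_ge0 (Hjoins_ub n pa) _ => x /(Hjoins_ge0_le pa)/andP[].
Qed.

Lemma Hjoins_rate_ge0_le a n : is_partition a -> 0 <= Hjoins_rate a n <= Hent a.
Proof.
move=> pa; have Ha := Hent_ge0 (is_partition_mod0 mu pa).
have sup_le : sup (Hjoins mu act S a n) <= n%:R * Hent a.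
  by apply: ge_sup_ge0 => [|x /(Hjoins_ge0_le pa)/andP[]//]; rewrite mulr_ge0.
rewrite /Hjoins_rate mulr_ge0 ?invr_ge0 ?sup_Hjoins_ge0 //=.
apply: le_trans (ler_wpM2l _ sup_le) _; first by rewrite invr_ge0.
by rewrite mulrA ler_piMl // mulVn_le1.
Qed.

Lemma Hjoins_rate_le a b n : is_partition a -> is_partition b ->
  Hjoins_rate a n <= Hjoins_rate b n + Hcond a b.
Proof.
move=> pa pb.
have c0 := Hcond_ge0 (is_partition_mod0 mu pa) (is_partition_mod0 mu pb).
have sup_le : sup (Hjoins mu act S a n) <=
              sup (Hjoins mu act S b n) + n%:R * Hcond a b.
  apply: ge_sup_ge0 => [|_ [gs Sgs <-]].
    by rewrite addr_ge0 ?mulr_ge0 ?sup_Hjoins_ge0.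
  apply: le_trans (Hent_bigjoin_ptrans_le gs pa pb) _; rewrite lerD2r.
  by apply: (ub_le_sup (Hjoins_ub n pb)); exists gs.
rewrite /Hjoins_rate; apply: le_trans (ler_wpM2l _ sup_le) _.
  by rewrite invr_ge0.
by rewrite mulrDr mulrA lerD2l ler_piMl // mulVn_le1.
Qed.

Lemma hstar_le_Hcond a b : is_partition a -> is_partition b ->
  hstar mu act S a <= hstar mu act S b + Hcond a b.
Proof.
move=> pa pb; rewrite -[Hcond a b]limn_sup_cst.
have bounded_rate x : is_partition x -> bounded_fun (Hjoins_rate x).
  move=> px; apply: (@bounded_fun_le _ _ (Hent x)) => n.
  by have /andP[r0 rx] := Hjoins_rate_ge0_le n px; rewrite ger0_norm.
have bc := @bounded_cst R R^o (Hcond a b) nat setT.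
apply: le_trans (le_limn_supD (bounded_rate b pb) bc).
apply: le_limn_sup (bounded_rate a pa) (bounded_funD (bounded_rate b pb) bc) _.
by move=> n; apply: Hjoins_rate_le.
Qed.

Lemma hstar_dist_le a b : is_partition a -> is_partition b ->
  `|hstar mu act S a - hstar mu act S b| <= rokhlin mu a b.
Proof.
move=> pa pb; have [pa0 pb0] := (is_partition_mod0 mu pa, is_partition_mod0 mu pb).
have := hstar_le_Hcond pa pb; have := hstar_le_Hcond pb pa.
have := Hcond_ge0 pa0 pb0; have := Hcond_ge0 pb0 pa0.
rewrite /rokhlin ler_norml; move=> *; apply/andP; split; lra.
Qed.

End Action.

Theorem lemma4p4 (R : realType) (d : measure_display) (T : measurableType d)
    (mu : probability T R) (G : groupType) (act : G -> T -> T) (S : set G) :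
  mp_action mu act ->
  (* continuity of alpha |-> h^*_{mu,S}(alpha) on (P, rho) *)
  (forall a, is_partition a ->
     forall eps : R, 0 < eps -> exists2 delta : R, 0 < delta &
       forall b, is_partition b -> rokhlin mu a b < delta ->
         `|hstar mu act S a - hstar mu act S b| < eps)
  /\
  (* the zero set {alpha : h^*_{mu,S}(alpha) = 0} is rho-closed *)
  (forall a, is_partition a ->
     (forall delta : R, 0 < delta -> exists b, [/\ is_partition b,
        rokhlin mu a b < delta & hstar mu act S b = 0]) ->
     hstar mu act S a = 0).
Proof.
move=> mp; split.
- move=> a pa eps eps0; exists eps => // b pb ab.
  exact: le_lt_trans (hstar_dist_le mp S pa pb) ab.
- move=> a pa approx; apply/eqP/negPn/negP => ha.
  have /approx[b [pb ab hb]] : 0 < `|hstar mu act S a| by rewrite normr_gt0.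
  by have := le_lt_trans (hstar_dist_le mp S pa pb) ab; rewrite hb subr0 ltxx.
Qed.
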